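(* Let $p\ge2$ and let $x=x_{i_1}^{r_1}x_{i_2}^{r_2}\cdots x_{i_n}^{r_n}$ ($n\ge1$, $i_1<\dots<i_n$, $r_k\ge1$) be a positive word in normal form in $F(p)$. Then $$N_2(x)=\max\{\,i_k+(p-1)(r_k+r_{k+1}+\dots+r_n)+1 : k=1,\dots,n\,\}$$ equals the $y$-coordinate of the last breakpoint of the graph of $x$ regarded as a homeomorphism of $\mathbb{R}$, and, with $D(x)=r_1+\dots+r_n+i_n$, $$\frac{D(x)}{2}\le N_2(x)\le D(x)(p-1)+1.$$
   Context: For $p\ge2$, $F(p)$ is the group of piecewise-linear orientation-preserving homeomorphisms of $[0,1]$ with breakpoints in $\mathbb{Z}[1/p]$ and slopes integer powers of $p$, with presentation $\langle x_0,x_1,\dots\mid x_i^{-1}x_jx_i=x_{j+p-1}\ (i<j)\rangle$; products are compositions on the right ($xy$ means first $x$, then $y$). Every element has a unique normal form $x_{i_1}^{r_1}\cdots x_{i_n}^{r_n}x_{j_m}^{-s_m}\cdots x_{j_1}^{-s_1}$ ($i_1<\dots<i_n$, $j_1<\dots<j_m$, positive exponents, and if both $x_i$ and $x_i^{-1}$ occur then one of $x_{i+1}^{\pm1},\dots,x_{i+p-1}^{\pm1}$ occurs). Realization on $\mathbb{R}$: the assignment $x_i\mapsto f_i$, where $f_i(t)=t$ for $t\le i$, $f_i(t)=pt+i(1-p)$ for $i\le t\le i+1$, $f_i(t)=t+p-1$ for $t\ge i+1$, extends to an isomorphism of $F(p)$ onto a group of piecewise-linear homeomorphisms of $\mathbb{R}$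 (with composition on the right); the graph of $x$ refers to the graph of this homeomorphism of $\mathbb{R}$. *)

From Stdlib Require Import Reals Lra Lia List Sorting.Sorted.
Import ListNotations.
Open Scope R_scope.

(* The PL homeomorphism f_i of R realizing the generator x_i of F(p). *)
Definition gen_fun (p i : nat) (t : R) : R :=
  if Rle_dec t (INR i) then t
  else if Rle_dec t (INR i + 1) then INR p * t + INR i * (1 - INR p)
  else t + INR p - 1.

(* A positive word x_{i1}^{r1} ... x_{in}^{rn}, encoded as the list
   [(i1,r1); ...; (in,rn)].  Products compose on the right: the word acts
   by first applying f_{i1} r1 times, then f_{i2} r2 times, etc. *)
Fixpoint word_fun (p : nat) (w : list (nat * nat)) (t : R) : R :=
  match w with
  | [] => t
  | (i, r) :: w' => word_fun p w' (Nat.iter r (gen_fun p i) t)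
  end.

Definition positive_normal_form (w : list (nat * nat)) : Prop :=
  w <> [] /\
  Sorted (fun a b => (fst a < fst b)%nat) w /\
  Forall (fun a => (1 <= snd a)%nat) w.

Fixpoint sum_exps (w : list (nat * nat)) : nat :=
  match w with
  | [] => 0%nat
  | (_, r) :: w' => (r + sum_exps w')%nat
  end.

Fixpoint N2 (p : nat) (w : list (nat * nat)) : nat :=
  match w with
  | [] => 0%nat
  | (i, r) :: w' => Nat.max (i + (p - 1) * (r + sum_exps w') + 1) (N2 p w')
  end.

Definition D_word (w : list (nat * nat)) : nat :=
  (sum_exps w + fst (last w (0%nat, 0%nat)))%nat.

Definition breakpoint (g : R -> R) (t : R) : Prop :=
  ~ (exists eps a b, 0 < eps /\ forall s, Rabs (s - t) < eps -> g s = a * s + b).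

Definition last_breakpoint (g : R -> R) (t : R) : Prop :=
  breakpoint g t /\ forall s, breakpoint g s -> s <= t.

(* Every generator f_i is bounded above by the translation s + (p - 1) and coincides
   with it exactly on [i + 1, +oo).  This "eventual shift" shape is stable under
   composition: if g agrees with s + c1 exactly from t1 on and h with s + c2 exactly
   from t2 on, then h o g agrees with s + c1 + c2 exactly from max t1 (t2 - c1) on.
   Hence a positive word is a translation by (p - 1)(r_1 + ... + r_n) on a half-line
   [t, +oo) and lies strictly below it to the left of t, so t is its last breakpoint;
   unfolding the recursion for t along the word shows that the value at t is N_2(x).
   The bounds on N_2 compare its first and last terms with D(x). *)

From Stdlib Require Import Reals List.
From Stdlib Require Import Lra Lia Sorting.Sorted.
Import ListNotations.
Open Scope R_scope.

Definition eventually_shift (g : R -> R) (t c : R) : Prop :=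
  forall s, g s <= s + c /\ (g s = s + c <-> t <= s).

Lemma eventually_shift_comp g h t1 c1 t2 c2 :
  eventually_shift g t1 c1 -> eventually_shift h t2 c2 ->
  eventually_shift (fun s => h (g s)) (Rmax t1 (t2 - c1)) (c1 + c2).
Proof.
  intros Hg Hh s.
  destruct (Hg s) as [Hg_le Hg_eq], (Hh (g s)) as [Hh_le Hh_eq].
  split; [lra|split].
  - intros E.
    assert (Eg : g s = s + c1) by lra.
    assert (Eh : h (g s) = g s + c2) by lra.
    apply Rmax_lub; [apply Hg_eq, Eg|].
    apply Hh_eq in Eh. lra.
  - intros Hs.
    assert (Eg : g s = s + c1) by (apply Hg_eq; eapply Rle_trans; [apply Rmax_l|exact Hs]).
    assert (Eh : h (g s) = g s + c2).
    { apply Hh_eq. pose proof (Rmax_r t1 (t2 - c1)). lra. }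
    lra.
Qed.

Lemma eventually_shift_last_breakpoint g t c :
  eventually_shift g t c -> last_breakpoint g t.
Proof.
  intros Hg. split.
  - intros [eps [a [b [Heps Haff]]]].
    assert (Near : forall s, Rabs (s - t) < eps -> g s = s + c -> a * s + b = s + c).
    { intros s Hs E. rewrite <- (Haff s Hs). exact E. }
    assert (At_t : a * t + b = t + c).
    { apply Near; [apply Rabs_def1; lra|apply Hg; lra]. }
    assert (Right : a * (t + eps / 2) + b = t + eps / 2 + c).
    { apply Near; [apply Rabs_def1; lra|apply Hg; lra]. }
    assert (Ha : a = 1) by nra.
    assert (Left : g (t - eps / 2) = t - eps / 2 + c).
    { rewrite Haff by (apply Rabs_def1; lra). subst a. lra. }
    apply Hg in Left. lra.
  - intros s Hs. apply Rnot_lt_le. intros Hlt. apply Hs.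
    exists (s - t), 1, c. split; [lra|].
    intros s' Hs'. apply Rabs_def2 in Hs'.
    rewrite (proj2 (proj2 (Hg s'))) by lra. ring.
Qed.

Section Generators.

Variables (p i : nat).
Hypothesis Hp : (2 <= p)%nat.

Lemma INR_p_ge_2 : 2 <= INR p.
Proof. apply (le_INR 2), Hp. Qed.

Lemma gen_fun_eventually_shift : eventually_shift (gen_fun p i) (INR i + 1) (INR p - 1).
Proof.
  intros s. pose proof INR_p_ge_2. pose proof (pos_INR i). unfold gen_fun.
  destruct (Rle_dec s (INR i)); [lra|].
  destruct (Rle_dec s (INR i + 1)); [|lra].
  split; [nra|split; intros; nra].
Qed.

Lemma iter_gen_fun_eventually_shift r : (1 <= r)%nat ->
  eventually_shift (Nat.iter r (gen_fun p i)) (INR i + 1) (INR r * (INR p - 1)).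
Proof.
  intros Hr. pose proof INR_p_ge_2. induction Hr as [|r Hr IH].
  - intros s. rewrite Rmult_1_l. exact (gen_fun_eventually_shift s).
  - pose proof (eventually_shift_comp _ _ _ _ _ _ IH gen_fun_eventually_shift) as Hcomp.
    rewrite Rmax_left in Hcomp by (apply (le_INR 1) in Hr; simpl in Hr; nra).
    intros s. rewrite S_INR, Rmult_plus_distr_r, Rmult_1_l. exact (Hcomp s).
Qed.

End Generators.

Lemma INR_max a b : INR (Nat.max a b) = Rmax (INR a) (INR b).
Proof.
  unfold Rmax. destruct (Rle_dec (INR a) (INR b)) as [H|H].
  - rewrite Nat.max_r by (apply INR_le, H). reflexivity.
  - rewrite Nat.max_l by (apply INR_le; lra). reflexivity.
Qed.

Definition word_shift (p : nat) (w : list (nat * nat)) : R :=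
  INR (sum_exps w) * (INR p - 1).

Lemma word_fun_eventually_shift p w :
  (2 <= p)%nat -> w <> [] -> Forall (fun a => (1 <= snd a)%nat) w ->
  eventually_shift (word_fun p w) (INR (N2 p w) - word_shift p w) (word_shift p w).
Proof.
  intros Hp. unfold word_shift. pose proof (INR_p_ge_2 p Hp).
  induction w as [|[i r] w IH]; intros Hne Hpos; [congruence|].
  inversion_clear Hpos as [|? ? Hr Hpos_w]. simpl in Hr.
  pose proof (iter_gen_fun_eventually_shift p i Hp r Hr) as Hblock.
  assert (Head : forall k, INR (i + (p - 1) * (r + k) + 1) =
                           INR i + 1 + (INR r + INR k) * (INR p - 1)).
  { intros k. rewrite !plus_INR, mult_INR, plus_INR, minus_INR by lia. simpl (INR 1). ring. }
  simpl sum_exps; simpl N2. rewrite plus_INR, INR_max, Head.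
  destruct w as [|b w].
  - simpl sum_exps. simpl (INR 0). intros s.
    replace (Rmax _ 0 - _) with (INR i + 1)
      by (rewrite Rmax_left by (pose proof (pos_INR i); pose proof (pos_INR r); nra); ring).
    rewrite Rplus_0_r. exact (Hblock s).
  - set (v := b :: w) in *.
    pose proof (eventually_shift_comp _ _ _ _ _ _ Hblock (IH ltac:(discriminate) Hpos_w))
      as Hcomp.
    set (k := INR (sum_exps v)) in *.
    set (n := INR (N2 p v)) in *.
    replace (Rmax _ n - _) with (Rmax (INR i + 1) (n - k * (INR p - 1) - INR r * (INR p - 1)))
      by (unfold Rmax; repeat destruct Rle_dec; lra).
    replace ((INR r + k) * (INR p - 1)) with (INR r * (INR p - 1) + k * (INR p - 1)) by ring.
    exact Hcomp.
Qed.

Lemma sum_exps_le_N2 p w : (2 <= p)%nat -> (sum_exps w <= N2 p w)%nat.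
Proof. intros Hp. destruct w as [|[i r] w]; simpl; [lia|]. nia. Qed.

Lemma last_index_lt_N2 p w d : w <> [] -> (fst (last w d) < N2 p w)%nat.
Proof.
  induction w as [|[i r] w IH]; intros Hne; [congruence|].
  destruct w as [|b w]; simpl in *; [lia|].
  specialize (IH ltac:(discriminate)). lia.
Qed.

Lemma N2_le_of_indices_le p M w : Forall (fun a => (fst a <= M)%nat) w ->
  (N2 p w <= M + (p - 1) * sum_exps w + 1)%nat.
Proof.
  induction w as [|[i r] w IH]; intros Hind; simpl; [lia|].
  inversion_clear Hind as [|? ? Hi Hind_w]. specialize (IH Hind_w). simpl in Hi. nia.
Qed.

Lemma Forall_le_last_of_Sorted (w : list (nat * nat)) d :
  Sorted (fun a b => (fst a < fst b)%nat) w -> Forall (fun a => (fst a <= fst (last w d))%nat) w.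
Proof.
  intros Hsorted. apply Sorted_StronglySorted in Hsorted; [|intros x y z; lia].
  induction Hsorted as [|a w _ IH Ha]; [constructor|].
  destruct w as [|b w]; [constructor; [simpl; lia|constructor]|].
  change (last (a :: b :: w) d) with (last (b :: w) d).
  constructor; [|exact IH].
  inversion_clear IH as [|? ? Hb _]. inversion_clear Ha as [|? ? Hab _]. lia.
Qed.

Lemma D_word_le_double_N2 p w : (2 <= p)%nat -> w <> [] -> (D_word w <= 2 * N2 p w)%nat.
Proof.
  intros Hp Hne. unfold D_word.
  pose proof (sum_exps_le_N2 p w Hp). pose proof (last_index_lt_N2 p w (0, 0)%nat Hne). lia.
Qed.

Lemma N2_le_D_word p w : (2 <= p)%nat -> Sorted (fun a b => (fst a < fst b)%nat) w ->
  (N2 p w <= D_word w * (p - 1) + 1)%nat.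
Proof.
  intros Hp Hsorted. unfold D_word.
  pose proof (N2_le_of_indices_le p _ w (Forall_le_last_of_Sorted w (0, 0)%nat Hsorted)). nia.
Qed.

Theorem proposition5 (p : nat) (w : list (nat * nat)) :
  (2 <= p)%nat -> positive_normal_form w ->
  (exists t, last_breakpoint (word_fun p w) t /\ word_fun p w t = INR (N2 p w)) /\
  INR (D_word w) / 2 <= INR (N2 p w) /\
  INR (N2 p w) <= INR (D_word w) * (INR p - 1) + 1.
Proof.
  intros Hp [Hne [Hsorted Hpos]].
  pose proof (word_fun_eventually_shift p w Hp Hne Hpos) as Hshift.
  split; [|split].
  - exists (INR (N2 p w) - word_shift p w). split.
    + exact (eventually_shift_last_breakpoint _ _ _ Hshift).
    + destruct (Hshift (INR (N2 p w) - word_shift p w)) as [_ [_ Hat]].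
      rewrite Hat by lra. ring.
  - pose proof (le_INR _ _ (D_word_le_double_N2 p w Hp Hne)) as Hle.
    rewrite mult_INR in Hle. simpl (INR 2) in Hle. lra.
  - pose proof (le_INR _ _ (N2_le_D_word p w Hp Hsorted)) as Hle.
    rewrite plus_INR, mult_INR, minus_INR in Hle by lia. simpl (INR 1) in Hle. lra.
Qed.
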